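(* Let $\lambda\in\mathbb{R}\setminus\{0\}$, $k\in\mathbb{Z}$, $u\in\mathbb{C}$ with $u\neq 1$, and $x\in\mathbb{R}$. Then for every integer $n\geq 0$, \[ \sum_{m=0}^{n}\binom{n}{m}FG_{m,\lambda}^{(k)}(x,u)\,(1)_{n-m,\lambda}-u\,FG_{n,\lambda}^{(k)}(x,u) =(1-u)\,n\sum_{m=0}^{n-1}\frac{\binom{n-1}{m}}{m+1}\sum_{j=1}^{m+1}\frac{(1)_{j,\lambda}}{j^{k-1}}S_{1,\lambda}(m+1,j)\,(x)_{n-1-m,\lambda}. \]
   Context: All generating functions are formal power series in $t$. For $z\in\mathbb{C}$: $(z)_{0,\lambda}=1$ and $(z)_{n,\lambda}=z(z-\lambda)\cdots(z-(n-1)\lambda)$ for $n\ge1$. The degenerate exponential is $e_\lambda^{z}(t)=(1+\lambda t)^{z/\lambda}=\sum_{n\ge0}(z)_{n,\lambda}\frac{t^n}{n!}$, and $e_\lambda(t)=e_\lambda^{1}(t)$. Also $\log_\lambda(1+t)=\frac{1}{\lambda}\big((1+t)^\lambda-1\big)$. The degenerate Stirling numbers of the first kind are defined by $\frac{1}{j!}(\log_\lambda(1+t))^j=\sum_{n\ge j}S_{1,\lambda}(n,j)\frac{t^n}{n!}$. The modified degenerate polyexponential function is $\mathrm{Ei}_{k,\lambda}(x)=\sum_{n\ge1}\frac{(1)_{n,\lambda}}{n^k(n-1)!}x^n$. The degenerate poly-Frobenius-Genocchi polynomials are defined by $\sum_{n\ge0}FG_{n,\lambda}^{(k)}(x,u)\frac{t^n}{n!}=\frac{(1-u)\,\mathrm{Ei}_{k,\lambda}(\log_\lambda(1+t))}{e_\lambda(t)-u}e_\lambda^{x}(t)$.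 *)

From HB Require Import structures.
From mathcomp Require Import all_boot all_order all_algebra.
From mathcomp Require Import reals.
From mathcomp Require Import complex.
Set Implicit Arguments. Unset Strict Implicit. Unset Printing Implicit Defensive.
Import Order.TTheory GRing.Theory Num.Theory.
Local Open Scope ring_scope.

(* Formal power series over a field F, represented by their (ordinary)
   coefficient sequences: A represents sum_n A n t^n. *)
Section FPS.
Variable F : fieldType.
Definition fps := nat -> F.

Definition fps_one : fps := fun n => (n == 0%N)%:R.
Definition fps_const (c : F) : fps := fun n => if n == 0%N then c else 0.
Definition fps_add (A B : fps) : fps := fun n => A n + B n.
Definition fps_sub (A B : fps) : fps := fun n => A n - B n.
Definition fps_scale (c : F) (A : fps) : fps := fun n => c * A n.
Definition fps_mul (A B : fps) : fps :=
  fun n => \sum_(i < n.+1) A i * B (n - i)%N.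
Definition fps_pow (A : fps) (j : nat) : fps := iter j (fps_mul A) fps_one.
(* composition A(G(t)), meaningful when G 0 = 0 (then only j <= n contribute) *)
Definition fps_comp (A G : fps) : fps :=
  fun n => \sum_(j < n.+1) A j * fps_pow G j n.
(* multiplicative inverse, for A 0 != 0:
   1/A = (1/a0) * sum_j (-G)^j  where  A = a0 (1 + G),  G 0 = 0 *)
Definition fps_inv (A : fps) : fps :=
  fps_scale (A 0%N)^-1
    (fps_comp (fun j => (-1) ^+ j)
              (fun m => if m == 0%N then 0 else A m / A 0%N)).
Definition fps_div (A B : fps) : fps := fps_mul A (fps_inv B).
Definition egf (a : nat -> F) : fps := fun n => a n / (n`!)%:R.
End FPS.

Section Degenerate.
Variable F : fieldType.

Definition dfall (z lam : F) (n : nat) : F := \prod_(i < n) (z - i%:R * lam).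

Definition dexp (lam z : F) : fps F := egf (dfall z lam).

(* log_lam(1+t) = ((1+t)^lam - 1)/lam, with (1+t)^lam = sum_n (lam)_{n,1} t^n/n! *)
Definition dlog (lam : F) : fps F :=
  fun n => (dexp 1 lam n - (n == 0%N)%:R) / lam.

Definition dS1 (lam : F) (n j : nat) : F :=
  (n`!)%:R * (fps_pow (dlog lam) j n / (j`!)%:R).

Definition dEi (k : int) (lam : F) : fps F :=
  fun n => if n == 0%N then 0
           else dfall 1 lam n / ((n%:R) ^ k * ((n.-1)`!)%:R).

Definition dFG (k : int) (lam x u : F) (n : nat) : F :=
  (n`!)%:R *
  fps_div (fps_mul (fps_scale (1 - u) (fps_comp (dEi k lam) (dlog lam)))
                   (dexp lam x))
          (fps_sub (dexp lam 1) (fps_const u)) n.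
End Degenerate.

From HB Require Import structures.
From mathcomp Require Import all_boot all_order all_algebra.
From mathcomp Require Import reals.
From mathcomp Require Import complex.
From mathcomp Require Import ring zify.
Set Implicit Arguments. Unset Strict Implicit. Unset Printing Implicit Defensive.
Import Order.TTheory GRing.Theory Num.Theory.
Local Open Scope ring_scope.

(* The generating function D of the FG_n satisfies
   D (e_lam(t) - u) = (1 - u) Ei_{k,lam}(log_lam(1+t)) e_lam^x(t).  Reading off
   the n-th coefficient (times n!) of the left side gives the left side of the
   identity.  On the right, the coefficient of t^(m+1)/(m+1)! in
   Ei_{k,lam}(log_lam(1+t)) is sum_j (1)_{j,lam}/j^(k-1) S_{1,lam}(m+1,j), and
   the factor n/(m+1) comes from C(n,m+1) = n/(m+1) C(n-1,m).  The only
   analytic input is that division of power series inverts multiplication,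
   which is checked coefficientwise on polynomial truncations. *)

Section FpsArithmetic.
Variable F : fieldType.
Implicit Types (A B C : fps F) (p q : {poly F}).

Lemma fps_mulBr A B C n :
  fps_mul A (fps_sub B C) n = fps_mul A B n - fps_mul A C n.
Proof. by rewrite /fps_mul -sumrB; apply: eq_bigr => i _; rewrite mulrBr. Qed.

Lemma fps_mul_constr A c n : fps_mul A (fps_const c) n = A n * c.
Proof.
rewrite /fps_mul /fps_const big_ord_recr /= subnn eqxx big1 ?add0r // => i _.
by rewrite subn_eq0 leqNgt ltn_ord mulr0.
Qed.

Lemma fps_mul_scalel c A B n :
  fps_mul (fps_scale c A) B n = c * fps_mul A B n.
Proof. by rewrite /fps_mul mulr_sumr; apply: eq_bigr => i _; rewrite mulrA. Qed.

Definition fps_agree n A p := forall m, (m <= n)%N -> A m = p`_m.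

Definition fps_trunc n A : {poly F} := \poly_(i < n.+1) A i.

Lemma fps_agree_trunc n A : fps_agree n A (fps_trunc n A).
Proof. by move=> m hm; rewrite coef_poly ltnS hm. Qed.

Lemma fps_agree_mul n A B p q :
  fps_agree n A p -> fps_agree n B q -> fps_agree n (fps_mul A B) (p * q).
Proof.
move=> hA hB m hm; rewrite /fps_mul coefM; apply: eq_bigr => i _.
rewrite hA ?hB //; first exact: leq_trans (leq_subr _ _) hm.
exact: leq_trans (ltnSE (ltn_ord i)) hm.
Qed.

Lemma fps_agree_pow n A p j :
  fps_agree n A p -> fps_agree n (fps_pow A j) (p ^+ j).
Proof.
move=> hA; elim: j => [|j IHj]; first by move=> m _; rewrite coef1.
by rewrite exprS; apply: fps_agree_mul.
Qed.

Lemma coef_exprM_lt p q j m :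
  p`_0 = 0 -> (m < j)%N -> (p ^+ j * q)`_m = 0.
Proof.
move=> p0 hm.
have -> : p = drop_poly 1 p * 'X.
  by apply/polyP => -[|i]; rewrite coefMX ?coef_drop_poly ?addn1.
by rewrite exprMn mulrAC coefMXn hm.
Qed.

Lemma fps_agree_inv n B
    (G := fun m => if m == 0%N then 0 else B m / B 0%N) :
  fps_agree n (fps_inv B)
    ((B 0%N)^-1 *: \sum_(j < n.+1) (- fps_trunc n G) ^+ j).
Proof.
move=> m hm; rewrite /fps_inv /fps_scale /fps_comp coefZ coef_sum.
congr (_ * _).
have coefN_expr j : ((- fps_trunc n G) ^+ j)`_m
    = (-1) ^+ j * (fps_trunc n G ^+ j)`_m.
  by rewrite -scaleN1r exprZn coefZ.
rewrite (big_ord_widen n.+1 (fun j => (-1) ^+ j * fps_pow G j m)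
  (hm : (m.+1 <= n.+1)%N)).
rewrite [RHS](bigID (fun j : 'I_n.+1 => (j < m.+1)%N)) /=.
rewrite [X in _ = _ + X]big1 ?addr0 => [|j]; last first.
  rewrite -leqNgt => hj; rewrite -[(- _) ^+ j]mulr1 coef_exprM_lt //.
  by rewrite coefN coef_poly oppr0.
apply: eq_bigr => j _.
by rewrite coefN_expr (fps_agree_pow j (@fps_agree_trunc n G)).
Qed.

(* Modulo t^(n+1), 1/B is b0^-1 times the truncated geometric series S in
   -P, where B = b0 (1 + P), and S (1 + P) = 1 - (-P)^(n+1). *)
Lemma fps_divK A B n : B 0%N != 0 -> fps_mul (fps_div A B) B n = A n.
Proof.
move=> hB; set b0 := B 0%N.
set P := fps_trunc n (fun m => if m == 0%N then 0 else B m / b0).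
set S : {poly F} := \sum_(j < n.+1) (- P) ^+ j.
have P0 : (- P)`_0 = 0 by rewrite coefN coef_poly oppr0.
have agreeB : fps_agree n B (b0%:P * (1 + P)).
  move=> [|m] hm; rewrite coefCM coefD coef1 coef_poly ltnS hm /=.
    by rewrite addr0 mulr1.
  by rewrite add0r mulrC divfK.
have geomS : S * (1 + P) = 1 - (- P) ^+ n.+1.
  by rewrite -[RHS]opprB subrX1 -/S; ring.
have agree_prod := fps_agree_mul (fps_agree_mul (@fps_agree_trunc n A)
  (@fps_agree_inv n B)) agreeB.
rewrite /fps_div (agree_prod _ (leqnn n)) -/P -/S -mul_polyC.
have -> : fps_trunc n A * (b0^-1%:P * S) * (b0%:P * (1 + P))
    = fps_trunc n A * (S * (1 + P)) * (b0^-1 * b0)%:P.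
  by rewrite polyCM; ring.
rewrite mulVf // mulr1 geomS mulrBr mulr1 coefB mulrC coef_exprM_lt // subr0.
by rewrite coef_poly ltnS leqnn.
Qed.
End FpsArithmetic.

Section ExponentialGeneratingFunctions.
Variable F : numFieldType.
Implicit Types (A B : fps F) (a b c : nat -> F).

Lemma natr_fact_neq0 n : (n`!)%:R != 0 :> F.
Proof. by rewrite pnatr_eq0 -lt0n fact_gt0. Qed.

Lemma fact_egf a n : (n`!)%:R * egf a n = a n.
Proof. by rewrite /egf mulrC divfK ?natr_fact_neq0. Qed.

Lemma fact_fps_mul A B n :
  (n`!)%:R * fps_mul A B n =
  \sum_(m < n.+1)
    'C(n, m)%:R * ((m`!)%:R * A m) * (((n - m)`!)%:R * B (n - m)%N).
Proof.
rewrite /fps_mul mulr_sumr; apply: eq_bigr => m _.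
by rewrite -(bin_fact (ltnSE (ltn_ord m))) !natrM; ring.
Qed.

Lemma bin_sum_shift c b n : c 0%N = 0 ->
  \sum_(m < n.+1) 'C(n, m)%:R * c m * b (n - m)%N =
  n%:R * \sum_(m < n) ('C(n.-1, m)%:R / (m.+1)%:R * c m.+1 * b (n.-1 - m)%N).
Proof.
move=> c0; rewrite big_ord_recl c0 mulr0 mul0r add0r mulr_sumr.
apply: eq_bigr => m _; rewrite lift0.
have -> : (n - m.+1 = n.-1 - m)%N by lia.
have binS : 'C(n, m.+1)%:R = n%:R * 'C(n.-1, m)%:R / (m.+1)%:R :> F.
  by rewrite -natrM mul_bin_diag natrM mulrAC divff ?mul1r // pnatr_eq0.
by rewrite binS; ring.
Qed.

Lemma fact_dEi_comp_dlog (k : int) (lam : F) m :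
  (m`!)%:R * fps_comp (dEi k lam) (dlog lam) m =
  \sum_(1 <= j < m.+1) (dfall 1 lam j / (j%:R) ^ (k - 1) * dS1 lam m j).
Proof.
rewrite /fps_comp big_ord_recl {1}/dEi eqxx mul0r add0r mulr_sumr.
rewrite big_add1 big_mkord; apply: eq_bigr => j _; rewrite lift0 /dEi /dS1 /=.
have j1_unit : (j.+1%:R : F) \is a GRing.unit by rewrite unitfE pnatr_eq0.
have -> : (j.+1%:R : F) ^ k = j.+1%:R ^ (k - 1) * j.+1%:R.
  by rewrite -[in LHS](subrK 1 k) (exprzDr j1_unit) expr1z.
rewrite factS natrM.
by field; rewrite natr_fact_neq0 nat1r expfz_neq0 pnatr_eq0.
Qed.

Lemma dFG_binomial_identity (lam x u : F) (k : int) n : u != 1 ->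
  \sum_(m < n.+1) ('C(n, m))%:R * dFG k lam x u m * dfall 1 lam (n - m)
    - u * dFG k lam x u n
  = (1 - u) * n%:R *
    \sum_(m < n) (('C(n.-1, m))%:R / (m.+1)%:R *
       \sum_(1 <= j < m.+2)
          (dfall 1 lam j / (j%:R) ^ (k - 1) * dS1 lam m.+1 j)
       * dfall x lam (n.-1 - m)).
Proof.
move=> hu; rewrite /dFG.
set C := fps_comp (dEi k lam) (dlog lam).
set A := fps_mul (fps_scale (1 - u) C) (dexp lam x).
set B := fps_sub (dexp lam 1) (fps_const u).
set D := fps_div A B.
have B0 : B 0%N != 0.
  rewrite /B /fps_sub /fps_const /dexp /egf /dfall big_ord0 divr1.
  by rewrite subr_eq0 eq_sym.
have -> : \sum_(m < n.+1) 'C(n, m)%:R * ((m`!)%:R * D m) * dfall 1 lam (n - m)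
    - u * ((n`!)%:R * D n) = (n`!)%:R * fps_mul D B n.
  rewrite fps_mulBr fps_mul_constr mulrBr; congr (_ - _); last by ring.
  by rewrite fact_fps_mul; apply: eq_bigr => m _; rewrite fact_egf.
rewrite fps_divK // /A fps_mul_scalel mulrCA fact_fps_mul -mulrA.
under eq_bigr do rewrite fact_egf fact_dEi_comp_dlog.
under [in RHS]eq_bigr do rewrite -mulr_suml mulrA.
congr (_ * _); apply: (bin_sum_shift (c := fun m =>
  \sum_(1 <= j < m.+1) (dfall 1 lam j / j%:R ^ (k - 1) * dS1 lam m j))).
exact: big_geq.
Qed.
End ExponentialGeneratingFunctions.

Local Open Scope complex_scope.

Theorem theorem2 (R : realType) (lam : R) (k : int) (u : R[i]) (x : R) :
  lam != 0 -> u != 1 -> forall n : nat,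
  \sum_(m < n.+1) ('C(n, m))%:R * dFG k lam%:C x%:C u m * dfall 1 lam%:C (n - m)
    - u * dFG k lam%:C x%:C u n
  = (1 - u) * n%:R *
    \sum_(m < n) (('C(n.-1, m))%:R / (m.+1)%:R *
       \sum_(1 <= j < m.+2)
          (dfall 1 lam%:C j / (j%:R) ^ (k - 1) * dS1 lam%:C m.+1 j)
       * dfall x%:C lam%:C (n.-1 - m)).
Proof.
move=> _ hu n; exact: (@dFG_binomial_identity _ lam%:C x%:C u k n hu).
Qed.
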